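(* Let $A=\begin{pmatrix}a&\xi\\\overline\xi&c\end{pmatrix}$ and $B=\begin{pmatrix}1&0\\0&b\end{pmatrix}$ be positive definite ($a,c>0$, $b\ge1$, $|\xi|^2<ac$). Suppose that for some $m\ge0$, $a_j,b_j\in\mathbb{C}$ and $\alpha,\beta>0$ the nonzero function \[ \Phi=\sum_{j=0}^m\begin{pmatrix}a_j\phi^\alpha_j\\ b_j\phi^\beta_j\end{pmatrix} \] is an eigenfunction of $H_{A,B}$. Then either $\xi=0$ or $\alpha=\beta$.
   Context: $H_{A,B}:=B(-\partial_x^2)+Ax^2$ on $L^2(\mathbb{R};\mathbb{C}^2)$, self-adjoint on the domain of pairs of functions in $H^2(\mathbb{R})\cap\{f:\int|x^2f|^2<\infty\}$. For $\alpha>0$, $n\ge0$: $\phi^\alpha_n(x)=\alpha^{1/4}h_n(\alpha^{1/2}x)e^{-\alpha x^2/2}/\sqrt{2^nn!\sqrt\pi}$, where $h_n(x)=(-1)^ne^{x^2}\partial_x^n[e^{-x^2}]$ is the $n$-th Hermite polynomial. *)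

From Stdlib Require Import Reals.
From Coquelicot Require Import Coquelicot.

Open Scope R_scope.

Definition hermite (n : nat) (x : R) : R :=
  (-1) ^ n * exp (x ^ 2) * Derive_n (fun t => exp (- t ^ 2)) n x.

Definition hermite_fn (alpha : R) (n : nat) (x : R) : R :=
  Rpower alpha (1/4) * hermite n (sqrt alpha * x) * exp (- alpha * x ^ 2 / 2)
  / sqrt (2 ^ n * INR (Factorial.fact n) * sqrt PI).

Definition Cderive2 (f : R -> C) (x : R) : C :=
  (Derive_n (fun t => Re (f t)) 2 x, Derive_n (fun t => Im (f t)) 2 x).

Open Scope C_scope.

(* H_{A,B} with A = [[a, xi],[conj xi, c]], B = diag(1, b), applied to (f1, f2):
   B(-d^2/dx^2)(f1,f2) + x^2 A (f1,f2)   *)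
Definition H_AB_1 (a c b : R) (xi : C) (f1 f2 : R -> C) (x : R) : C :=
  - Cderive2 f1 x + RtoC (x ^ 2) * (RtoC a * f1 x + xi * f2 x).
Definition H_AB_2 (a c b : R) (xi : C) (f1 f2 : R -> C) (x : R) : C :=
  - (RtoC b * Cderive2 f2 x) + RtoC (x ^ 2) * (Cconj xi * f1 x + RtoC c * f2 x).

Definition Phi1 (m : nat) (aj : nat -> C) (alpha : R) (x : R) : C :=
  sum_n (fun j => aj j * RtoC (hermite_fn alpha j x)) m.
Definition Phi2 (m : nat) (bj : nat -> C) (beta : R) (x : R) : C :=
  sum_n (fun j => bj j * RtoC (hermite_fn beta j x)) m.

(** Each component of [Phi] is a polynomial times a Gaussian, [exp (-alpha x^2/2)]
    resp. [exp (-beta x^2/2)], and the operator keeps each such class stable.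
    If [alpha < beta], the second row of the eigenvalue equation writes
    [x^2 (conj xi) Phi1], which has Gaussian rate [alpha], as a function of rate
    [beta]; since [exp ((beta - alpha) x^2 / 2)] outgrows every polynomial, this
    forces [Phi1 = 0], and the first row then reduces to [x^2 xi Phi2 = 0].  So
    [Phi = 0] unless [xi = 0]. *)

From Stdlib Require Import Reals Lra Lia List Classical.
From Coquelicot Require Import Coquelicot.

Open Scope R_scope.

Fixpoint peval (l : list R) (x : R) : R :=
  match l with nil => 0 | c :: l' => c + x * peval l' x end.

Definition poly_fun (p : R -> R) : Prop := exists l, forall x, p x = peval l x.

Lemma poly_fun_ext (p q : R -> R) :
  (forall x, p x = q x) -> poly_fun p -> poly_fun q.
Proof. intros H [l Hl]; exists l; intros x; rewrite <- H; apply Hl. Qed.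

Lemma poly_fun_const (c : R) : poly_fun (fun _ => c).
Proof. exists (c :: nil); intros x; simpl; ring. Qed.

Lemma poly_fun_xmul (p : R -> R) : poly_fun p -> poly_fun (fun x => x * p x).
Proof. intros [l Hl]; exists (0 :: l); intros x; simpl; rewrite Hl; ring. Qed.

Lemma peval_scal (k : R) (l : list R) (x : R) :
  peval (map (Rmult k) l) x = k * peval l x.
Proof. induction l as [|c l IH]; simpl; [|rewrite IH]; ring. Qed.

Lemma poly_fun_scal (k : R) (p : R -> R) : poly_fun p -> poly_fun (fun x => k * p x).
Proof.
  intros [l Hl]; exists (map (Rmult k) l); intros x; rewrite Hl, peval_scal; reflexivity.
Qed.

Fixpoint padd (l l' : list R) : list R :=
  match l, l' with
  | nil, _ => l'
  | _, nil => l
  | c :: l1, c' :: l1' => (c + c') :: padd l1 l1'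
  end.

Lemma peval_padd (l l' : list R) (x : R) : peval (padd l l') x = peval l x + peval l' x.
Proof.
  revert l'; induction l as [|c l IH]; intros [|c' l']; simpl; try ring.
  rewrite IH; ring.
Qed.

Lemma poly_fun_add (p q : R -> R) :
  poly_fun p -> poly_fun q -> poly_fun (fun x => p x + q x).
Proof.
  intros [l Hl] [l' Hl']; exists (padd l l'); intros x; rewrite peval_padd, Hl, Hl'.
  reflexivity.
Qed.

Lemma poly_fun_comp_scal (s : R) (p : R -> R) : poly_fun p -> poly_fun (fun x => p (s * x)).
Proof.
  intros [l Hl]; apply poly_fun_ext with (fun x => peval l (s * x)).
  { intros x; rewrite Hl; reflexivity. }
  clear Hl; induction l as [|c l IH]; simpl.
  - apply poly_fun_const.
  - apply poly_fun_add; [apply poly_fun_const|].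
    apply poly_fun_ext with (fun x => x * (s * peval l (s * x))); [intros; ring|].
    apply poly_fun_xmul, poly_fun_scal, IH.
Qed.

Lemma poly_fun_is_derive (p : R -> R) :
  poly_fun p -> exists q, poly_fun q /\ forall x, is_derive p x (q x).
Proof.
  intros [l Hl].
  assert (Hl' : exists q, poly_fun q /\ forall x, is_derive (peval l) x (q x)).
  { clear Hl; induction l as [|c l [q [Hq Hd]]].
    - exists (fun _ => 0); split; [apply poly_fun_const|].
      intros x; apply (is_derive_const 0).
    - exists (fun x => peval l x + x * q x); split.
      + apply poly_fun_add; [exists l; reflexivity | apply poly_fun_xmul, Hq].
      + intros x; simpl.
        replace (peval l x + x * q x) with (0 + (1 * peval l x + x * q x)) by ring.
        apply (is_derive_plus (fun _ => c) (fun t => t * peval l t)).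
        * apply (is_derive_const c).
        * apply Derive.is_derive_mult; [apply (is_derive_id x) | apply Hd]. }
  destruct Hl' as [q [Hq Hd]]; exists q; split; [exact Hq|].
  intros x; apply is_derive_ext with (peval l); [intros; symmetry; apply Hl | apply Hd].
Qed.

Lemma peval_zero_or_eventually_ge (l : list R) :
  (forall x, peval l x = 0) \/
  exists eps M, 0 < eps /\ forall x, M <= x -> eps <= Rabs (peval l x).
Proof.
  induction l as [|c l [H0 | [eps [M [Heps HM]]]]]; simpl.
  - left; reflexivity.
  - destruct (Req_dec c 0) as [Hc | Hc].
    + left; intros x; rewrite H0, Hc; ring.
    + right; exists (Rabs c), 0; split; [apply Rabs_pos_lt, Hc|].
      intros x _; rewrite H0, Rmult_0_r, Rplus_0_r; lra.
  - right; exists 1, (Rmax M (Rmax 1 ((Rabs c + 1) / eps))); split; [lra|].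
    intros x Hx.
    assert (HMx : M <= x) by (eapply Rle_trans; [apply Rmax_l | exact Hx]).
    assert (H1x : 1 <= x /\ (Rabs c + 1) / eps <= x).
    { split; (eapply Rle_trans; [|exact Hx]); (eapply Rle_trans; [|apply Rmax_r]);
        [apply Rmax_l | apply Rmax_r]. }
    destruct H1x as [H1x Hcx].
    assert (Hlarge : Rabs c + 1 <= x * Rabs (peval l x)).
    { apply Rle_trans with (x * eps).
      - apply Rmult_le_compat_r with (r := eps) in Hcx; [|lra].
        unfold Rdiv in Hcx; rewrite Rmult_assoc, Rinv_l, Rmult_1_r in Hcx; lra.
      - apply Rmult_le_compat_l; [lra | apply HM, HMx]. }
    pose proof (Rabs_triang_inv (x * peval l x) (- c)) as T.
    replace (x * peval l x - - c) with (c + x * peval l x) in T by ring.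
    rewrite Rabs_Ropp, Rabs_mult, (Rabs_right x) in T by lra; lra.
Qed.

Lemma poly_fun_eventually_zero (p : R -> R) (M : R) :
  poly_fun p -> (forall x, M <= x -> p x = 0) -> forall x, p x = 0.
Proof.
  intros [l Hl] Hz.
  destruct (peval_zero_or_eventually_ge l) as [H0 | [eps [M' [Heps HM']]]].
  - intros x; rewrite Hl; apply H0.
  - exfalso; specialize (HM' (Rmax M M') (Rmax_r _ _)).
    rewrite <- Hl, Hz, Rabs_R0 in HM' by apply Rmax_l; lra.
Qed.

Lemma peval_pow_bound (l : list R) :
  exists K N, forall x, 1 <= x -> Rabs (peval l x) <= K * x ^ N.
Proof.
  induction l as [|c l [K [N HK]]]; simpl.
  - exists 0, 0%nat; intros; rewrite Rabs_R0; simpl; lra.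
  - exists (Rabs c + K), (S N); intros x Hx.
    specialize (HK x Hx); pose proof (pow_R1_Rle x (S N) Hx) as HxN; simpl in HxN |- *.
    eapply Rle_trans; [apply Rabs_triang|].
    rewrite Rabs_mult, (Rabs_right x) by lra.
    pose proof (Rabs_pos c).
    assert (x * Rabs (peval l x) <= x * (K * x ^ N)) by (apply Rmult_le_compat_l; lra).
    nra.
Qed.

Lemma pow_div_fact_le_exp (y : R) (n : nat) :
  0 <= y -> y ^ S n / INR (Factorial.fact (S n)) <= exp y.
Proof.
  intros Hy; eapply Rle_trans; [|apply (exp_ge_taylor y (S n) Hy)].
  rewrite tech5.
  assert (0 <= sum_f_R0 (fun k => y ^ k / INR (Factorial.fact k)) n); [|lra].
  apply cond_pos_sum; intros k; apply Rmult_le_pos;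
    [apply pow_le, Hy | left; apply Rinv_0_lt_compat, INR_fact_lt_0].
Qed.

Lemma exp_sq_dominates_pow (d eps K M : R) (N : nat) :
  0 < d -> 0 < eps ->
  exists x, M <= x /\ 1 <= x /\ K * x ^ N < eps * exp (d * x ^ 2).
Proof.
  intros Hd Heps.
  set (c0 := d ^ S N / INR (Factorial.fact (S N))).
  assert (Hc0 : 0 < c0).
  { apply Rmult_lt_0_compat; [apply pow_lt, Hd | apply Rinv_0_lt_compat, INR_fact_lt_0]. }
  set (x := Rmax M (Rmax 1 ((Rabs K + 1) / (eps * c0)))).
  assert (HKx : (Rabs K + 1) / (eps * c0) <= x) by
    (eapply Rle_trans; [|apply Rmax_r]; apply Rmax_r).
  assert (H1x : 1 <= x) by (eapply Rle_trans; [|apply Rmax_r]; apply Rmax_l).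
  exists x; split; [apply Rmax_l | split; [exact H1x|]].
  assert (Hec : 0 < eps * c0) by (apply Rmult_lt_0_compat; assumption).
  assert (Hlin : Rabs K + 1 <= eps * c0 * x).
  { apply Rmult_le_compat_r with (r := eps * c0) in HKx; [|lra].
    unfold Rdiv in HKx; rewrite Rmult_assoc, Rinv_l, Rmult_1_r in HKx; lra. }
  assert (Hpow : x <= x ^ S (S N)) by (simpl; pose proof (pow_R1_Rle x N H1x); nra).
  assert (HxN : 0 < x ^ N) by (apply pow_lt; lra).
  (* [c0 x^(2N+2) <= exp (d x^2)] is one term of the exponential series. *)
  assert (Hexp : c0 * x ^ S (S N) * x ^ N <= exp (d * x ^ 2)).
  { eapply Rle_trans; [|apply pow_div_fact_le_exp; pose proof (pow2_ge_0 x); nra].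
    unfold c0; rewrite Rpow_mult_distr, <- pow_mult.
    replace (2 * S N)%nat with (S (S N) + N)%nat by lia; rewrite pow_add; lra. }
  assert (K * x ^ N < eps * c0 * x ^ S (S N) * x ^ N); [|nra].
  apply Rmult_lt_compat_r; [exact HxN|].
  pose proof (Rle_abs K).
  assert (eps * c0 * x <= eps * c0 * x ^ S (S N)) by (apply Rmult_le_compat_l; lra).
  lra.
Qed.

Lemma poly_mul_exp_sq_eq_poly_zero (d : R) (p r : R -> R) :
  0 < d -> poly_fun p -> poly_fun r ->
  (forall x, p x * exp (d * x ^ 2) = r x) -> forall x, p x = 0.
Proof.
  intros Hd [lp Hp] [lr Hr] Heq.
  destruct (peval_zero_or_eventually_ge lp) as [H0 | [eps [M [Heps HM]]]].
  { intros x; rewrite Hp; apply H0. }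
  exfalso; destruct (peval_pow_bound lr) as [K [N HK]].
  destruct (exp_sq_dominates_pow d eps K M N Hd Heps) as [x [HMx [H1x Hx]]].
  specialize (HM x HMx); specialize (HK x H1x).
  rewrite <- Hr, <- Heq, Hp, Rabs_mult, (Rabs_right (exp _)) in HK
    by (left; apply exp_pos).
  pose proof (exp_pos (d * x ^ 2)); nra.
Qed.

Definition poly_gauss (k : R) (f : R -> R) : Prop :=
  exists p, poly_fun p /\ forall x, f x = p x * exp (k * x ^ 2).

Lemma poly_gauss_ext (k : R) (f g : R -> R) :
  (forall x, f x = g x) -> poly_gauss k f -> poly_gauss k g.
Proof. intros H [p [Hp Hf]]; exists p; split; [exact Hp|]; intros x; rewrite <- H; apply Hf. Qed.

Lemma poly_gauss_add (k : R) (f g : R -> R) :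
  poly_gauss k f -> poly_gauss k g -> poly_gauss k (fun x => f x + g x).
Proof.
  intros [p [Hp Hf]] [q [Hq Hg]]; exists (fun x => p x + q x).
  split; [apply poly_fun_add; assumption | intros x; rewrite Hf, Hg; ring].
Qed.

Lemma poly_gauss_scal (k c : R) (f : R -> R) :
  poly_gauss k f -> poly_gauss k (fun x => c * f x).
Proof.
  intros [p [Hp Hf]]; exists (fun x => c * p x).
  split; [apply poly_fun_scal, Hp | intros x; rewrite Hf; ring].
Qed.

Lemma poly_gauss_x2mul (k : R) (f : R -> R) :
  poly_gauss k f -> poly_gauss k (fun x => x ^ 2 * f x).
Proof.
  intros [p [Hp Hf]]; exists (fun x => x * (x * p x)).
  split; [apply poly_fun_xmul, poly_fun_xmul, Hp | intros x; rewrite Hf; ring].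
Qed.

Lemma poly_gauss_Derive (k : R) (f : R -> R) :
  poly_gauss k f -> poly_gauss k (Derive f).
Proof.
  intros [p [Hp Hf]]; destruct (poly_fun_is_derive p Hp) as [q [Hq Hd]].
  exists (fun x => q x + 2 * k * (x * p x)); split.
  - apply poly_fun_add; [exact Hq | apply poly_fun_scal, poly_fun_xmul, Hp].
  - intros x; rewrite (Derive_ext f (fun y => p y * exp (k * y ^ 2))) by apply Hf.
    apply is_derive_unique.
    replace ((q x + 2 * k * (x * p x)) * exp (k * x ^ 2))
      with (q x * exp (k * x ^ 2) + p x * (exp (k * x ^ 2) * (k * (2 * x)))) by ring.
    apply (Derive.is_derive_mult p (fun y => exp (k * y ^ 2))); [apply Hd|].
    auto_derive; [exact I | simpl; ring].
Qed.

Lemma poly_gauss_Derive2 (k : R) (f : R -> R) :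
  poly_gauss k f -> poly_gauss k (fun x => Derive_n f 2 x).
Proof. intros H; apply poly_gauss_Derive, poly_gauss_Derive, H. Qed.

Lemma poly_gauss_rate_unique (k1 k2 : R) (f : R -> R) :
  k1 < k2 -> poly_gauss k1 f -> poly_gauss k2 f -> forall x, f x = 0.
Proof.
  intros Hk [r [Hr Hfr]] [p [Hp Hfp]].
  assert (Hp0 : forall x, p x = 0).
  { apply (poly_mul_exp_sq_eq_poly_zero (k2 - k1) p r); [lra | exact Hp | exact Hr |].
    intros x; apply Rmult_eq_reg_r with (exp (k1 * x ^ 2)); [|apply Rgt_not_eq, exp_pos].
    rewrite Rmult_assoc, <- exp_plus, <- Hfr, Hfp; f_equal; f_equal; ring. }
  intros x; rewrite Hfp, Hp0; ring.
Qed.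

Lemma poly_gauss_x2_vanish (k : R) (f : R -> R) :
  poly_gauss k f -> (forall x, x ^ 2 * f x = 0) -> forall x, f x = 0.
Proof.
  intros [p [Hp Hf]] H.
  assert (Hp0 : forall x, p x = 0).
  { apply (poly_fun_eventually_zero p 1 Hp); intros x Hx.
    specialize (H x); rewrite Hf in H.
    pose proof (exp_pos (k * x ^ 2)) as Hexp.
    assert (Hx2 : 0 < x ^ 2) by (apply pow_lt; lra).
    destruct (Rmult_integral _ _ H) as [Hz | Hz]; [lra|].
    destruct (Rmult_integral _ _ Hz); [assumption | lra]. }
  intros x; rewrite Hf, Hp0; ring.
Qed.

Lemma poly_gauss_Derive_n_exp_neg_sq (n : nat) :
  poly_gauss (-1) (Derive_n (fun t => exp (- t ^ 2)) n).
Proof.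
  induction n as [|n IH]; [|apply poly_gauss_Derive, IH].
  exists (fun _ => 1); split; [apply poly_fun_const|].
  intros x; simpl; rewrite Rmult_1_l; f_equal; ring.
Qed.

Lemma poly_fun_hermite (n : nat) : poly_fun (hermite n).
Proof.
  destruct (poly_gauss_Derive_n_exp_neg_sq n) as [p [Hp Hd]].
  apply poly_fun_ext with (fun y => (-1) ^ n * p y); [|apply poly_fun_scal, Hp].
  intros y; unfold hermite; rewrite Hd.
  assert (E : exp (y ^ 2) * exp (-1 * y ^ 2) = 1)
    by (rewrite <- exp_plus, <- exp_0; f_equal; ring).
  transitivity ((-1) ^ n * p y * (exp (y ^ 2) * exp (-1 * y ^ 2))); [rewrite E|]; ring.
Qed.

Lemma poly_gauss_hermite_fn (alpha : R) (n : nat) :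
  poly_gauss (- alpha / 2) (hermite_fn alpha n).
Proof.
  exists (fun x => Rpower alpha (1 / 4) / sqrt (2 ^ n * INR (Factorial.fact n) * sqrt PI)
              * hermite n (sqrt alpha * x)); split.
  - apply poly_fun_scal, (poly_fun_comp_scal _ (hermite n)), poly_fun_hermite.
  - intros x; unfold hermite_fn.
    replace (- alpha * x ^ 2 / 2) with (- alpha / 2 * x ^ 2) by field.
    unfold Rdiv; ring.
Qed.

Open Scope C_scope.

Definition cpoly_gauss (k : R) (f : R -> C) : Prop :=
  poly_gauss k (fun x => Re (f x)) /\ poly_gauss k (fun x => Im (f x)).

Lemma cpoly_gauss_ext (k : R) (f g : R -> C) :
  (forall x, f x = g x) -> cpoly_gauss k f -> cpoly_gauss k g.
Proof.
  intros H [Hre Him]; split;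
    [apply poly_gauss_ext with (fun x => Re (f x)) | apply poly_gauss_ext with (fun x => Im (f x))];
    try assumption; intros x; rewrite H; reflexivity.
Qed.

Lemma cpoly_gauss_add (k : R) (f g : R -> C) :
  cpoly_gauss k f -> cpoly_gauss k g -> cpoly_gauss k (fun x => f x + g x).
Proof. intros [Hf1 Hf2] [Hg1 Hg2]; split; apply poly_gauss_add; assumption. Qed.

Lemma cpoly_gauss_cmul (k : R) (z : C) (f : R -> C) :
  cpoly_gauss k f -> cpoly_gauss k (fun x => z * f x).
Proof.
  intros [Hre Him]; split.
  - apply poly_gauss_ext with (fun x => Re z * Re (f x) + (- Im z) * Im (f x))%R.
    { intros x; unfold Re, Im; simpl; ring. }
    apply poly_gauss_add; apply poly_gauss_scal; assumption.
  - apply poly_gauss_ext with (fun x => Re z * Im (f x) + Im z * Re (f x))%R.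
    { intros x; unfold Re, Im; simpl; ring. }
    apply poly_gauss_add; apply poly_gauss_scal; assumption.
Qed.

Lemma cpoly_gauss_x2mul (k : R) (f : R -> C) :
  cpoly_gauss k f -> cpoly_gauss k (fun x => RtoC (x ^ 2) * f x).
Proof.
  intros [Hre Him]; split;
    [eapply poly_gauss_ext, poly_gauss_x2mul, Hre | eapply poly_gauss_ext, poly_gauss_x2mul, Him];
    intros x; unfold Re, Im; simpl; ring.
Qed.

Lemma cpoly_gauss_Cderive2 (k : R) (f : R -> C) :
  cpoly_gauss k f -> cpoly_gauss k (Cderive2 f).
Proof. intros [Hre Him]; split; apply poly_gauss_Derive2; assumption. Qed.

Lemma cpoly_gauss_RtoC (k : R) (g : R -> R) :
  poly_gauss k g -> cpoly_gauss k (fun x => RtoC (g x)).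
Proof.
  intros Hg; split; [exact Hg|].
  apply poly_gauss_ext with (fun x => 0 * g x)%R; [intros; simpl; ring|].
  apply poly_gauss_scal, Hg.
Qed.

Lemma cpoly_gauss_Phi1 (m : nat) (aj : nat -> C) (alpha : R) :
  cpoly_gauss (- alpha / 2) (Phi1 m aj alpha).
Proof.
  assert (Hterm : forall j, cpoly_gauss (- alpha / 2)
                              (fun x => aj j * RtoC (hermite_fn alpha j x))).
  { intros j; apply cpoly_gauss_cmul, cpoly_gauss_RtoC, poly_gauss_hermite_fn. }
  unfold Phi1; induction m as [|m IH].
  - eapply cpoly_gauss_ext, Hterm; intros x; rewrite sum_O; reflexivity.
  - eapply cpoly_gauss_ext, cpoly_gauss_add, Hterm; [|exact IH].
    intros x; rewrite sum_Sn; reflexivity.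
Qed.

Lemma cpoly_gauss_Phi2 (m : nat) (bj : nat -> C) (beta : R) :
  cpoly_gauss (- beta / 2) (Phi2 m bj beta).
Proof. exact (cpoly_gauss_Phi1 m bj beta). Qed.

Lemma cpoly_gauss_rate_unique (k1 k2 : R) (f : R -> C) :
  (k1 < k2)%R -> cpoly_gauss k1 f -> cpoly_gauss k2 f -> forall x, f x = 0.
Proof.
  intros Hk [H1re H1im] [H2re H2im] x; apply injective_projections;
    [exact (poly_gauss_rate_unique _ _ _ Hk H1re H2re x)
    | exact (poly_gauss_rate_unique _ _ _ Hk H1im H2im x)].
Qed.

Lemma cpoly_gauss_x2_scal_vanish (k : R) (z : C) (g : R -> C) :
  z <> 0 -> cpoly_gauss k g -> (forall x, RtoC (x ^ 2) * (z * g x) = 0) ->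
  forall x, g x = 0.
Proof.
  intros Hz Hg H x.
  destruct (cpoly_gauss_cmul k z g Hg) as [Hre Him].
  assert (Hzg : z * g x = 0).
  { apply injective_projections;
      [apply (poly_gauss_x2_vanish k _ Hre) | apply (poly_gauss_x2_vanish k _ Him)];
      intros y; specialize (H y); [apply (f_equal Re) in H | apply (f_equal Im) in H];
      revert H; unfold Re, Im; simpl; intros H; rewrite <- H; ring. }
  replace (g x) with (/ z * (z * g x)) by (field; exact Hz).
  rewrite Hzg; ring.
Qed.

(* One row of [H_{A,B} Phi = lam Phi]: [f] is the component of the row, [g] the
   other one, [s] the diagonal entry of [B] and [d] that of [A]. *)
Definition eigen_row (s d : R) (z lam : C) (f g : R -> C) : Prop :=
  forall x, - (RtoC s * Cderive2 f x) + RtoC (x ^ 2) * (RtoC d * f x + z * g x) = lam * f x.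

Lemma eigen_row_slower_partner_vanish (kf kg s d : R) (z lam : C) (f g : R -> C) :
  (kf < kg)%R -> z <> 0 -> cpoly_gauss kf f -> cpoly_gauss kg g ->
  eigen_row s d z lam f g -> forall x, g x = 0.
Proof.
  intros Hk Hz Hf Hg Hrow.
  apply (cpoly_gauss_x2_scal_vanish kg z g Hz Hg).
  apply (cpoly_gauss_rate_unique kf kg _ Hk).
  - apply cpoly_gauss_ext with (fun x => lam * f x + RtoC s * Cderive2 f x
                                         + RtoC (- d) * (RtoC (x ^ 2) * f x)).
    { intros x; rewrite <- Hrow, RtoC_opp; ring. }
    repeat apply cpoly_gauss_add; repeat apply cpoly_gauss_cmul;
      [exact Hf | apply cpoly_gauss_Cderive2, Hf | apply cpoly_gauss_x2mul, Hf].
  - apply cpoly_gauss_x2mul, cpoly_gauss_cmul, Hg.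
Qed.

Lemma eigen_row_partner_vanish (k s d : R) (z lam : C) (f g : R -> C) :
  z <> 0 -> cpoly_gauss k g -> (forall x, f x = 0) ->
  eigen_row s d z lam f g -> forall x, g x = 0.
Proof.
  intros Hz Hg Hf0 Hrow.
  apply (cpoly_gauss_x2_scal_vanish k z g Hz Hg); intros x.
  assert (HD : Cderive2 f x = 0).
  { unfold Cderive2; apply injective_projections; cbn [fst snd RtoC];
      (rewrite (Derive_n_ext _ (fun _ => 0%R)) by (intros t; rewrite Hf0; reflexivity));
      apply (Derive_n_const 1). }
  specialize (Hrow x); rewrite Hf0, HD in Hrow.
  rewrite <- (Cmult_0_r lam), <- Hrow; ring.
Qed.

Lemma eigen_system_vanish (kf kg s d s' d' : R) (z w lam : C) (f g : R -> C) :
  (kf < kg)%R -> z <> 0 -> w <> 0 -> cpoly_gauss kf f -> cpoly_gauss kg g ->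
  eigen_row s d z lam f g -> eigen_row s' d' w lam g f ->
  (forall x, f x = 0) /\ (forall x, g x = 0).
Proof.
  intros Hk Hz Hw Hf Hg Hrowf Hrowg.
  assert (Hg0 := eigen_row_slower_partner_vanish _ _ _ _ _ _ _ _ Hk Hz Hf Hg Hrowf).
  split; [exact (eigen_row_partner_vanish _ _ _ _ _ _ _ Hw Hf Hg0 Hrowg) | exact Hg0].
Qed.

Theorem mainTheorem9 (a c b : R) (xi : C) (m : nat) (aj bj : nat -> C)
  (alpha beta : R)
  (ha : (0 < a)%R) (hc : (0 < c)%R) (hb : (1 <= b)%R)
  (hxi : (Cmod xi ^ 2 < a * c)%R)
  (halpha : (0 < alpha)%R) (hbeta : (0 < beta)%R)
  (hnz : exists x : R, Phi1 m aj alpha x <> 0 \/ Phi2 m bj beta x <> 0)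
  (heig : exists lam : C, forall x : R,
      H_AB_1 a c b xi (Phi1 m aj alpha) (Phi2 m bj beta) x = lam * Phi1 m aj alpha x /\
      H_AB_2 a c b xi (Phi1 m aj alpha) (Phi2 m bj beta) x = lam * Phi2 m bj beta x) :
  xi = 0 \/ alpha = beta.
Proof.
  destruct heig as [lam Heig].
  destruct (classic (xi = 0)) as [Hxi0 | Hxi]; [left; exact Hxi0 | right].
  assert (Hxic : Cconj xi <> 0).
  { intros H; apply Hxi; rewrite <- (Cconj_conj xi), H; apply injective_projections;
      simpl; ring. }
  set (P1 := Phi1 m aj alpha) in *; set (P2 := Phi2 m bj beta) in *.
  assert (Hrow1 : eigen_row 1 a xi lam P1 P2).
  { intros x; rewrite <- (proj1 (Heig x)); unfold H_AB_1; ring. }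
  assert (Hrow2 : eigen_row b c (Cconj xi) lam P2 P1).
  { intros x; rewrite <- (proj2 (Heig x)); unfold H_AB_2; ring. }
  assert (HP : ~ ((forall x, P1 x = 0) /\ (forall x, P2 x = 0))).
  { intros [H1 H2]; destruct hnz as [x [Hx | Hx]]; apply Hx; [apply H1 | apply H2]. }
  destruct (Rtotal_order alpha beta) as [Hlt | [Heq | Hgt]]; [exfalso | exact Heq | exfalso];
    apply HP.
  - apply and_comm; apply (eigen_system_vanish (- beta / 2) (- alpha / 2) b c 1 a
                             (Cconj xi) xi lam P2 P1); try assumption;
      [lra | apply cpoly_gauss_Phi2 | apply cpoly_gauss_Phi1].
  - apply (eigen_system_vanish (- alpha / 2) (- beta / 2) 1 a b c xi (Cconj xi) lam P1 P2);
      try assumption; [lra | apply cpoly_gauss_Phi1 | apply cpoly_gauss_Phi2].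
Qed.
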